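(* Let $X_0,X_1,\ldots$ be an irreducible and aperiodic discrete-time Markov chain on a finite state space $\Omega$ with stationary distribution $\pi$. Let $x\in\Omega$ be a state and $\mathcal C\subset\Omega$ a subset such that, for an initial state $x_0\in\Omega$, $$P\{\tau_x<\tau_{\mathcal C}\mid X_0=x_0\}\ge c$$ for some constant $c$. Let $\mathcal B\subset\Omega$ be a subset such that every path from $x$ to $\mathcal C$ intersects $\mathcal B$. Then $$E\{\tau_{\mathcal C}\mid X_0=x_0\}\ge\frac{c\,\pi(x)}{\pi(\mathcal B)}.$$
   Context: For $A\subset\Omega$ (or a single state), $\tau_A=\min\{t\ge0:X_t\in A\}$. A path is a sequence of states in which each consecutive pair has positive transition probability. $\pi(\mathcal B)=\sum_{y\in\mathcal B}\pi(y)$. *)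

From HB Require Import structures.
From mathcomp Require Import all_boot all_order all_algebra.
From mathcomp Require Import all_classical all_reals.
From mathcomp Require Import ereal topology normedtype sequences.
Set Implicit Arguments. Unset Strict Implicit. Unset Printing Implicit Defensive.
Import Order.TTheory GRing.Theory Num.Theory.
Local Open Scope ring_scope.

Section MarkovDefs.
Variables (R : realType) (T : finType).
Implicit Types (P : T -> T -> R) (x y : T) (A : {set T}).

Definition stochastic P :=
  (forall x y, 0 <= P x y) /\ (forall x, \sum_(y : T) P x y = 1).

Definition trajprob P (x0 : T) (n : nat) (w : n.+1.-tuple T) : R :=
  (thead w == x0)%:R * \prod_(i < n) P (nth x0 w i) (nth x0 w i.+1).

Definition PrTraj P (x0 : T) (n : nat) (E : pred (n.+1.-tuple T)) : R :=
  \sum_(w : n.+1.-tuple T | E w) trajprob P x0 w.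

Definition nstep P (n : nat) x y : R :=
  PrTraj P x (fun w : n.+1.-tuple T => tnth w ord_max == y).

Definition irreducible P := forall x y, exists n, 0 < nstep P n x y.

(* gcd of the return times {n >= 1 : P^n(x,x) > 0} equals 1 for each x. *)
Definition aperiodic P :=
  forall x (d : nat),
    (forall n, (0 < n)%N -> 0 < nstep P n x x -> (d %| n)%N) -> d = 1%N.

Definition stationary_distribution P (pi : T -> R) :=
  (forall x, 0 <= pi x) /\ \sum_(x : T) pi x = 1 /\
  (forall y, \sum_(x : T) pi x * P x y = pi y).

Definition measure_set (pi : T -> R) A : R := \sum_(y in A) pi y.

(* P{tau_A > n | X_0 = x0} = P{X_0,...,X_n all outside A}. *)
Definition Pr_tau_gt P x0 A (n : nat) : R :=
  PrTraj P x0 (fun w : n.+1.-tuple T => all (fun z => z \notin A) w).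

(* P{tau_x = n < tau_A | X_0 = x0}: X_n = x, X_0..X_{n-1} <> x,
   and X_0..X_n all outside A. *)
Definition Pr_hit_before_at P x0 x A (n : nat) : R :=
  PrTraj P x0 (fun w : n.+1.-tuple T =>
    [&& tnth w ord_max == x, x \notin take n w
      & all (fun z => z \notin A) w]).

Definition Pr_hit_before P x0 x A : \bar R :=
  (\sum_(n <oo) (Pr_hit_before_at P x0 x A n)%:E)%E.

(* E{tau_A | X_0 = x0} = sum_{n >= 0} P{tau_A > n}  (value in [0, +oo]). *)
Definition E_tau P x0 A : \bar R :=
  (\sum_(n <oo) (Pr_tau_gt P x0 A n)%:E)%E.

Definition separates P x (C B : {set T}) :=
  forall s : seq T, path (fun a b => 0 < P a b) x s ->
    last x s \in C -> has (fun z => z \in B) (x :: s).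

End MarkovDefs.

From HB Require Import structures.
From mathcomp Require Import all_boot all_order all_algebra.
From mathcomp Require Import all_classical all_reals.
From mathcomp Require Import ereal topology normedtype sequences.
From mathcomp Require Import lra.
Import Order.TTheory GRing.Theory Num.Theory.
Local Open Scope ring_scope.
Set Implicit Arguments. Unset Strict Implicit. Unset Printing Implicit Defensive.
Import numFieldNormedType.Exports.

(* Let u y be the probability of hitting x before C from y, and K = pi x / pi B.
   Off C the function K u satisfies K u <= 1 + P (K u): away from x because u
   is subharmonic there, and at x because of the escape bound
   pi x * P_x{tau_C < tau_x^+} <= pi B.  Such a function is dominated by the
   expected hitting time of C, so E_x0 tau_C >= K u x0 >= c K.
   The escape bound comes from stationarity: the pi-average of the probability
   of reaching x before B within N steps grows by at least
   pi x * P_x{tau_B < tau_x^+} - pi B per step while staying below 1, and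
   P_x{tau_C < tau_x^+} <= P_x{tau_B < tau_x^+} because every path from x to C
   meets B. *)

Lemma le0_of_bounded_increments (R : archiRealFieldType) (S : nat -> R) (d b : R) :
  S 0%N = 0 -> (forall N, d <= S N.+1 - S N) -> (forall N, S N <= b) -> d <= 0.
Proof.
move=> S0 dS Sb; have MdS M : M%:R * d <= S M.
  elim: M => [|M IH]; first by rewrite mul0r S0.
  by rewrite -natr1 mulrDl mul1r; have := dS M; lra.
rewrite leNgt; apply/negP => d_gt0.
have := le_trans (MdS (Num.truncn (b / d)).+1) (Sb _).
by rewrite -ler_pdivlMr // leNgt truncnS_gt.
Qed.

Lemma nneseries_ge_of_tail_bound (R : realType) (g : nat -> R) (K L : R) :
  (forall n, 0 <= g n) -> 0 <= K ->
  (forall N, L <= \sum_(0 <= n < N) g n + K * g N) ->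
  (L%:E <= \sum_(n <oo) (g n)%:E)%E.
Proof.
move=> g_ge0 K_ge0 L_le.
have g_ge0E n : (0 <= n)%N -> xpredT n -> (0 <= (g n)%:E)%E.
  by move=> _ _; rewrite lee_fin.
case E: (\sum_(n <oo) (g n)%:E)%E => [r| |]; last 2 first.
- exact: leey.
- by have := nneseries_ge0 g_ge0E; rewrite E.
have G_le N : \sum_(0 <= n < N) g n <= r.
  by have := nneseries_lim_ge N g_ge0E; rewrite E sumEFin lee_fin.
rewrite lee_fin -subr_le0.
apply: (@le0_of_bounded_increments _ (fun N => K * \sum_(0 <= n < N) g n) _ (K * r)).
- by rewrite big_geq ?mulr0.
- move=> N; rewrite big_nat_recr //= mulrDr addrAC subrr add0r.
  by have := L_le N; have := G_le N; lra.
- by move=> N; rewrite ler_wpM2l.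
Qed.

Section MarkovChain.
Variables (R : realType) (T : finType) (P : T -> T -> R).
Hypothesis sP : stochastic P.
Implicit Types (A B C : {set T}) (x y z : T).

Lemma trajprob_cons y a n (w : n.+1.-tuple T) :
  trajprob P y (cons_tuple a w) = (a == y)%:R * P a (thead w) * trajprob P (thead w) w.
Proof.
rewrite /trajprob big_ord_recl /= eqxx mul1r mulrA; congr (_ * _ * _).
  by rewrite /thead (tnth_nth y).
apply: eq_bigr => i _; rewrite /bump /= add1n.
have lt_i : (i < size w)%N by rewrite size_tuple ltnW // ltnS.
have lt_i1 : (i.+1 < size w)%N by rewrite size_tuple ltnS.
by rewrite (set_nth_default (thead w) y lt_i) (set_nth_default (thead w) y lt_i1).
Qed.

Lemma PrTraj_first_step y n (E : pred (n.+2.-tuple T)) :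
  PrTraj P y E =
  \sum_z P y z * PrTraj P z (fun w : n.+1.-tuple T => E (cons_tuple y w)).
Proof.
rewrite /PrTraj big_mkcond.
rewrite (reindex (fun p : T * n.+1.-tuple T => cons_tuple p.1 p.2)) /=; last first.
  apply: onW_bij; exists (fun w : n.+2.-tuple T => (thead w, behead_tuple w)).
    by case=> a w /=; congr pair; apply: val_inj.
  by move=> w /=; rewrite [RHS]tuple_eta; apply: val_inj.
rewrite -(pair_bigA _ (fun a w => if E (cons_tuple a w)
  then trajprob P y (cons_tuple a w) else 0)) /=.
rewrite (bigD1 y) //= [X in _ + X]big1 ?addr0 => [|a /negbTE ay]; last first.
  by apply: big1 => w _; rewrite trajprob_cons ay mul0r mul0r if_same.
under [RHS]eq_bigr => z _ do rewrite big_mkcond mulr_sumr.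
rewrite exchange_big /=; apply: eq_bigr => w _.
rewrite (bigD1 (thead w)) //= [X in _ + X]big1 ?addr0 => [|z zw]; last first.
  by case: ifP => _; rewrite ?mulr0 // /trajprob eq_sym (negbTE zw) mul0r mulr0.
by rewrite trajprob_cons eqxx mul1r; case: ifP; rewrite ?mulr0.
Qed.

Lemma PrTraj0 y (E : pred (1.-tuple T)) : PrTraj P y E = (E [tuple y])%:R.
Proof.
rewrite /PrTraj big_mkcond.
rewrite (reindex (fun a : T => [tuple a])) /=; last first.
  apply: onW_bij; exists (fun w : 1.-tuple T => thead w) => //.
  move=> w /=; rewrite [RHS]tuple_eta; apply: val_inj => /=.
  by rewrite (@size0nil _ (behead w)) // size_behead size_tuple.
rewrite (bigD1 y) //= [X in _ + X]big1 ?addr0 => [|a /negbTE ay]; last first.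
  by rewrite /trajprob /= ay mul0r if_same.
rewrite /trajprob big_ord0 mulr1.
have -> : thead [tuple y] = y by [].
by rewrite [y == y]eqxx; case: ifP.
Qed.

Lemma PrTraj_andl y n (b : bool) (E : pred (n.+1.-tuple T)) :
  PrTraj P y (fun w => b && E w) = b%:R * PrTraj P y E.
Proof. by case: b; rewrite ?mul1r // mul0r /PrTraj big_pred0. Qed.

Lemma PrTraj_ge0 y n (E : pred (n.+1.-tuple T)) : 0 <= PrTraj P y E.
Proof.
have [P_ge0 _] := sP; apply: sumr_ge0 => w _; rewrite mulr_ge0 ?ler0n //.
exact: prodr_ge0.
Qed.

Lemma Pr_tau_gt0 y A : Pr_tau_gt P y A 0 = (y \notin A)%:R.
Proof. by rewrite /Pr_tau_gt PrTraj0 /= andbT. Qed.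

Lemma Pr_tau_gtS y A n :
  Pr_tau_gt P y A n.+1 = (y \notin A)%:R * \sum_z P y z * Pr_tau_gt P z A n.
Proof.
rewrite /Pr_tau_gt PrTraj_first_step mulr_sumr; apply: eq_bigr => z _.
by rewrite PrTraj_andl mulrCA.
Qed.

Lemma Pr_hit_before_at0 y x A :
  Pr_hit_before_at P y x A 0 = ((y == x) && (y \notin A))%:R.
Proof. by rewrite /Pr_hit_before_at PrTraj0 /= andbT. Qed.

Lemma Pr_hit_before_atS y x A n :
  Pr_hit_before_at P y x A n.+1 =
  ((y != x) && (y \notin A))%:R * \sum_z P y z * Pr_hit_before_at P z x A n.
Proof.
rewrite /Pr_hit_before_at PrTraj_first_step mulr_sumr; apply: eq_bigr => z _.
rewrite mulrCA -PrTraj_andl; congr (_ * _); apply: eq_bigl => w /=.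
rewrite [tnth _ ord_max](tnth_nth y) [tnth w ord_max](tnth_nth y) /= in_cons.
by rewrite (eq_sym x y); case: (y == x); case: (y \in A); rewrite ?andbF.
Qed.

Lemma ler_sum_step y (f g : T -> R) : (forall z, 0 < P y z -> f z <= g z) ->
  \sum_z P y z * f z <= \sum_z P y z * g z.
Proof.
move=> fg; have [P_ge0 _] := sP; apply: ler_sum => z _.
have [Pyz_gt0|] := ltP 0 (P y z); first by rewrite ler_wpM2l ?fg.
by rewrite le_eqVlt ltNge P_ge0 orbF => /eqP ->; rewrite !mul0r.
Qed.

Lemma Pr_tau_gt_partial_sum_ge C (v : T -> R) (b : R) :
  (forall y, v y <= b) -> (forall y, y \in C -> v y <= 0) ->
  (forall y, y \notin C -> v y <= 1 + \sum_z P y z * v z) ->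
  forall N y, v y <= \sum_(0 <= n < N) Pr_tau_gt P y C n + b * Pr_tau_gt P y C N.
Proof.
move=> v_le_b v_le0 v_drift; elim=> [|N IH] y.
  rewrite big_geq // add0r Pr_tau_gt0.
  by have [/v_le0|_] := boolP (y \in C); rewrite /= ?mulr0 ?mulr1.
have [yC|yC] := boolP (y \in C).
  have tau0 n : Pr_tau_gt P y C n = 0.
    by case: n => [|n]; rewrite ?Pr_tau_gt0 ?Pr_tau_gtS yC ?mul0r.
  by rewrite big1 => [|n _]; rewrite ?tau0 ?mulr0 ?addr0 ?v_le0.
rewrite big_nat_recl // Pr_tau_gt0 yC /= -addrA.
under eq_bigr => n _ do rewrite Pr_tau_gtS yC /= mul1r.
rewrite Pr_tau_gtS yC /= mul1r exchange_big /= mulr_sumr -big_split /=.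
apply: le_trans (v_drift y yC) _; rewrite lerD2l.
under [X in _ <= X]eq_bigr => z _ do rewrite -mulr_sumr mulrCA -mulrDr.
by apply: ler_sum_step => // z _; apply: IH.
Qed.

Variable x : T.

Definition Pr_hit_before_lt A N y : R :=
  \sum_(0 <= n < N) Pr_hit_before_at P y x A n.

Definition hit_prob A y : R := limn (fun N => Pr_hit_before_lt A N y).

Lemma Pr_hit_before_lt0 A y : Pr_hit_before_lt A 0 y = 0.
Proof. by rewrite /Pr_hit_before_lt big_geq. Qed.

Lemma Pr_hit_before_ltS A N y :
  Pr_hit_before_lt A N.+1 y = (y \notin A)%:R *
    ((y == x)%:R + (y != x)%:R * \sum_z P y z * Pr_hit_before_lt A N z).
Proof.
rewrite /Pr_hit_before_lt big_nat_recl // Pr_hit_before_at0.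
under eq_bigr => n _ do rewrite Pr_hit_before_atS.
rewrite -mulr_sumr; under [in RHS]eq_bigr => z _ do rewrite mulr_sumr.
rewrite [in RHS]exchange_big /=.
by case: (y == x); case: (y \in A); rewrite /= ?mul0r ?mul1r ?add0r ?addr0.
Qed.

Lemma Pr_hit_before_lt_ge0 A N y : 0 <= Pr_hit_before_lt A N y.
Proof. by apply: sumr_ge0 => n _; apply: PrTraj_ge0. Qed.

Lemma Pr_hit_before_lt_le1 A N y : Pr_hit_before_lt A N y <= 1.
Proof.
elim: N y => [|N IH] y; first by rewrite Pr_hit_before_lt0.
rewrite Pr_hit_before_ltS; case: (y \in A); rewrite /= ?mul0r // mul1r.
case: (y == x); rewrite /= ?mul0r ?addr0 ?mul1r ?add0r //.
case: sP => P_ge0 P_sum1; rewrite -(P_sum1 y); apply: ler_sum => z _.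
by rewrite ler_piMr.
Qed.

Lemma Pr_hit_before_lt_nondecreasing A y :
  nondecreasing_seq (fun N => Pr_hit_before_lt A N y).
Proof.
apply/nondecreasing_seqP => N.
by rewrite /Pr_hit_before_lt big_nat_recr //= lerDl; apply: PrTraj_ge0.
Qed.

Lemma Pr_hit_before_lt_cvg A y : cvgn (fun N => Pr_hit_before_lt A N y).
Proof.
apply: nondecreasing_is_cvgn; first exact: Pr_hit_before_lt_nondecreasing.
by exists 1 => _ [N _ <-]; apply: Pr_hit_before_lt_le1.
Qed.

Lemma Pr_hit_beforeE A y : Pr_hit_before P y x A = (hit_prob A y)%:E.
Proof.
rewrite /Pr_hit_before -EFin_lim; last exact: Pr_hit_before_lt_cvg.
by congr (limn _); apply: funext => N; rewrite /= sumEFin.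
Qed.

Lemma hit_prob_ge A N y : Pr_hit_before_lt A N y <= hit_prob A y.
Proof.
apply: nondecreasing_cvgn_le; first exact: Pr_hit_before_lt_nondecreasing.
exact: Pr_hit_before_lt_cvg.
Qed.

Lemma hit_prob_le A y b :
  (forall N, Pr_hit_before_lt A N y <= b) -> hit_prob A y <= b.
Proof. by move=> le_b; apply: limr_le; [apply: Pr_hit_before_lt_cvg|apply: nearW]. Qed.

Lemma hit_prob_ge0 A y : 0 <= hit_prob A y.
Proof. by apply: le_trans (hit_prob_ge A 0 y); rewrite Pr_hit_before_lt0. Qed.

Lemma hit_prob_le1 A y : hit_prob A y <= 1.
Proof. by apply: hit_prob_le => N; apply: Pr_hit_before_lt_le1. Qed.

Lemma Pr_hit_before_lt_eq0 A N y : y \in A -> Pr_hit_before_lt A N y = 0.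
Proof. by case: N => [|N] yA; rewrite ?Pr_hit_before_lt0 // Pr_hit_before_ltS yA mul0r. Qed.

Lemma hit_prob_le0 A y : y \in A -> hit_prob A y <= 0.
Proof. by move=> yA; apply: hit_prob_le => N; rewrite Pr_hit_before_lt_eq0. Qed.

Lemma hit_prob_subharmonic A y : y \notin A -> y != x ->
  hit_prob A y <= \sum_z P y z * hit_prob A z.
Proof.
move=> yA yx; apply: hit_prob_le => N.
apply: le_trans (Pr_hit_before_lt_nondecreasing A y (leqnSn N)) _.
rewrite Pr_hit_before_ltS yA (negbTE yx) /= mul1r add0r mul1r.
by apply: ler_sum_step => // z _; apply: hit_prob_ge.
Qed.

Definition reach_before B y := exists2 s, path (fun a b => 0 < P a b) x s &
  last x s = y /\ all (fun z => z \notin B) (belast x s).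

Lemma reach_before_start B : reach_before B x.
Proof. by exists [::]. Qed.

Lemma reach_before_step B y z :
  reach_before B y -> y \notin B -> 0 < P y z -> reach_before B z.
Proof.
case=> s s_path [s_last s_avoid] yB Pyz; exists (rcons s z).
  by rewrite rcons_path s_path s_last.
by rewrite last_rcons belast_rcons lastI all_rcons s_last yB s_avoid.
Qed.

Lemma reach_before_sep B C y : separates P x C B ->
  reach_before B y -> y \notin B -> y \notin C.
Proof.
move=> sep [s s_path [s_last s_avoid]] yB; apply/negP => yC.
have := sep s s_path; rewrite s_last lastI has_rcons s_last => /(_ yC).
by rewrite (negbTE yB) /=; apply/negP; rewrite -all_predC s_avoid.
Qed.

Lemma Pr_hit_before_lt_le_sep B C N y : separates P x C B -> reach_before B y ->
  Pr_hit_before_lt B N y <= Pr_hit_before_lt C N y.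
Proof.
move=> sep; elim: N y => [|N IH] y y_reach; first by rewrite !Pr_hit_before_lt0.
have [yB|yB] := boolP (y \in B).
  by rewrite Pr_hit_before_lt_eq0 //; apply: Pr_hit_before_lt_ge0.
rewrite !Pr_hit_before_ltS yB (reach_before_sep sep y_reach yB) /= !mul1r.
rewrite lerD2l ler_wpM2l ?ler0n //; apply: ler_sum_step => // z Pyz.
exact/IH/(reach_before_step y_reach yB Pyz).
Qed.

Lemma hit_prob_le_sep B C y : separates P x C B -> reach_before B y ->
  hit_prob B y <= hit_prob C y.
Proof.
move=> sep y_reach; apply: ler_lim; try exact: Pr_hit_before_lt_cvg.
by apply: nearW => N; apply: Pr_hit_before_lt_le_sep.
Qed.

Variable pi : T -> R.
Hypothesis pi_stat : stationary_distribution P pi.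

Lemma stationary_sum (f : T -> R) :
  \sum_w pi w * \sum_z P w z * f z = \sum_z pi z * f z.
Proof.
have [_ [_ piP]] := pi_stat.
under eq_bigr => w _ do rewrite mulr_sumr.
rewrite exchange_big /=; apply: eq_bigr => z _.
by rewrite -piP mulr_suml; apply: eq_bigr => w _; rewrite mulrA.
Qed.

Lemma Pr_hit_before_ltS_ge B N w : x \notin B ->
  \sum_z P w z * Pr_hit_before_lt B N z
  + (w == x)%:R * (1 - \sum_z P x z * Pr_hit_before_lt B N z) - (w \in B)%:R
  <= Pr_hit_before_lt B N.+1 w.
Proof.
move=> xB; rewrite Pr_hit_before_ltS.
have [wB|wB] := boolP (w \in B).
  have /negbTE -> : w != x by apply: contraNneq xB => <-.
  rewrite /= mul0r addr0 mul0r subr_le0 -(sP.2 w); apply: ler_sum => z _.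
  by rewrite ler_piMr ?(sP.1, Pr_hit_before_lt_le1).
have [->|wx] := eqVneq w x; rewrite /= !mul1r ?mul0r ?subr0 ?addr0 ?add0r //.
by rewrite addrC subrK.
Qed.

Lemma escape_bound B : x \notin B ->
  pi x * (1 - \sum_z P x z * hit_prob B z) <= measure_set pi B.
Proof.
move=> xB; have [pi_ge0 [pi_sum1 _]] := pi_stat.
pose a N := Pr_hit_before_lt B N.
pose S N := \sum_w pi w * a N w.
rewrite -subr_le0; apply: (@le0_of_bounded_increments _ S _ 1).
- by rewrite /S big1 // => w _; rewrite /a Pr_hit_before_lt0 mulr0.
- move=> N; set e := 1 - \sum_z P x z * a N z.
  have le_e : pi x * (1 - \sum_z P x z * hit_prob B z) <= pi x * e.
    rewrite ler_wpM2l // lerD2l lerN2; apply: ler_sum_step => // z _.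
    exact: hit_prob_ge.
  have := ler_sum (index_enum T) (fun w (_ : true) =>
    ler_wpM2l (pi_ge0 w) (Pr_hit_before_ltS_ge N w xB)).
  under eq_bigr => w _ do rewrite mulrBr mulrDr.
  rewrite sumrB big_split /= stationary_sum -/(S N) -/(S N.+1).
  have -> : \sum_w pi w * ((w == x)%:R * e) = pi x * e.
    rewrite (bigD1 x) //= eqxx mul1r big1 ?addr0 // => w /negbTE ->.
    by rewrite mul0r mulr0.
  have -> : \sum_w pi w * (w \in B)%:R = measure_set pi B.
    rewrite /measure_set [RHS]big_mkcond; apply: eq_bigr => w _.
    by case: (w \in B); rewrite ?mulr1 ?mulr0.
  by lra.
- move=> N; rewrite -pi_sum1; apply: ler_sum => w _.
  by rewrite ler_piMr ?Pr_hit_before_lt_le1.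
Qed.

Lemma escape_bound_sep B C : separates P x C B ->
  pi x * (1 - \sum_z P x z * hit_prob C z) <= measure_set pi B.
Proof.
move=> sep; have [pi_ge0 _] := pi_stat.
have [xB|xB] := boolP (x \in B).
  apply: le_trans (_ : pi x <= _).
    rewrite ler_piMr // lerBlDr lerDl sumr_ge0 // => z _.
    by rewrite mulr_ge0 ?(sP.1, hit_prob_ge0).
  by rewrite /measure_set (bigD1 x) //= lerDl sumr_ge0.
apply: le_trans (escape_bound xB); rewrite ler_wpM2l // lerD2l lerN2.
apply: ler_sum_step => // z Pxz; apply: hit_prob_le_sep => //.
exact: reach_before_step (reach_before_start B) xB Pxz.
Qed.

End MarkovChain.

Theorem propositionI1 (R : realType) (T : finType) (P : T -> T -> R)
    (pi : T -> R) (x x0 : T) (C B : {set T}) (c : R) :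
  stochastic P -> irreducible P -> aperiodic P ->
  stationary_distribution P pi ->
  (c%:E <= Pr_hit_before P x0 x C)%E ->
  separates P x C B ->
  ((c * pi x / measure_set pi B)%:E <= E_tau P x0 C)%E.
Proof.
move=> sP _ _ pi_stat c_le sep; have [pi_ge0 _] := pi_stat.
set u := hit_prob P x C; set m := measure_set pi B; set K := pi x / m.
have m_ge0 : 0 <= m by apply: sumr_ge0.
have K_ge0 : 0 <= K by apply: divr_ge0.
have K_escape : K * (1 - \sum_z P x z * u z) <= 1.
  have [m0|m_neq0] := eqVneq m 0; first by rewrite /K m0 invr0 mulr0 mul0r.
  rewrite /K mulrAC ler_pdivrMr ?mul1r ?lt_def ?m_neq0 //.
  exact: escape_bound_sep sep.
have drift y : y \notin C -> K * u y <= 1 + \sum_z P y z * (K * u z).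
  move=> yC; under eq_bigr do rewrite mulrCA; rewrite -mulr_sumr.
  have [->|yx] := eqVneq y x.
    have : K * u x <= K by rewrite ler_piMr ?hit_prob_le1.
    by move: K_escape; rewrite mulrBr mulr1; lra.
  apply: le_trans (ler_wpM2l K_ge0 (hit_prob_subharmonic sP yC yx)) _.
  by rewrite -/u lerDr.
have tail_bound := Pr_tau_gt_partial_sum_ge (v := fun y => K * u y) sP
  (fun y => ler_piMr K_ge0 (hit_prob_le1 sP x C y))
  (fun y yC => mulr_ge0_le0 K_ge0 (hit_prob_le0 sP x yC)) drift.
rewrite /E_tau -mulrA -/K; apply: (nneseries_ge_of_tail_bound (K := K)) => // [n|N].
  exact: PrTraj_ge0.
apply: le_trans (tail_bound N x0); rewrite mulrC ler_wpM2l //.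
by move: c_le; rewrite (Pr_hit_beforeE sP) lee_fin.
Qed.
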